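(* There exist absolute constants $c>0$ and $d_0$ such that for all $d\ge d_0$, $\kappa\ge10$, $K\in\mathbb N$, $\eta\ge1$ and every $x_0\in\mathbb{R}^d$ the following holds. Let $f(x)=\frac\kappa2\|x\|_2^2$, $\mathcal H(x,v)=f(x)+\frac12\|v\|_2^2$, $v_0\sim\mathcal N(0,I_d)$, and let $(x_K,v_K)$ be obtained from $(x_0,v_0)$ by $K$ leapfrog steps $v_{k+1/2}=v_k-\frac\eta2\nabla f(x_k)$, $x_{k+1}=x_k+\eta v_{k+1/2}$, $v_{k+1}=v_{k+1/2}-\frac\eta2\nabla f(x_{k+1})$. Then with probability at least $1-d^{-5}$ over $v_0$, $\mathcal H(x_0,v_0)-\mathcal H(x_K,v_K)\le-c\,d$. *)

From HB Require Import structures.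
From mathcomp Require Import all_boot all_order all_algebra.
From mathcomp Require Import all_classical all_reals all_analysis.
From mathcomp Require Import Rstruct.
Set Implicit Arguments. Unset Strict Implicit. Unset Printing Implicit Defensive.
Import Order.TTheory GRing.Theory Num.Theory.
Local Open Scope classical_set_scope.
Local Open Scope ring_scope.

Notation R := Rdefinitions.R.

Definition fquad (d : nat) (kappa : R) (x : 'I_d -> R) : R :=
  kappa / 2 * \sum_(i < d) x i ^+ 2.

Definition grad_fquad (d : nat) (kappa : R) (x : 'I_d -> R) : 'I_d -> R :=
  fun i => kappa * x i.

Definition hamiltonian (d : nat) (kappa : R) (x v : 'I_d -> R) : R :=
  fquad kappa x + 1 / 2 * \sum_(i < d) v i ^+ 2.

Definition leapfrog_step (d : nat) (gradf : ('I_d -> R) -> ('I_d -> R))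
  (eta : R) (s : ('I_d -> R) * ('I_d -> R)) : ('I_d -> R) * ('I_d -> R) :=
  let x := s.1 in let v := s.2 in
  let vh := fun i => v i - eta / 2 * gradf x i in
  let x' := fun i => x i + eta * vh i in
  let v' := fun i => vh i - eta / 2 * gradf x' i in
  (x', v').

Definition leapfrog (d : nat) (gradf : ('I_d -> R) -> ('I_d -> R))
  (eta : R) (K : nat) (s : ('I_d -> R) * ('I_d -> R)) :=
  iter K (leapfrog_step gradf eta) s.

(* Integral of g against the standard Gaussian measure N(0, I_n) on n.-tuple R,
   defined as the iterated integral against the one-dimensional standard
   normal law (normal_prob 0 1) in each coordinate. *)
Fixpoint gauss_iter (n : nat) : (n.-tuple R -> \bar R) -> \bar R :=
  match n return (n.-tuple R -> \bar R) -> \bar R with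
  | 0 => fun g => g [tuple]
  | n'.+1 => fun g =>
      (\int[normal_prob (0:R) 1]_t gauss_iter (fun v => g (cons_tuple t v)))%E
  end.

Definition gauss_prob (n : nat) (A : set (n.-tuple R)) : \bar R :=
  gauss_iter (fun v => (\1_A v)%:E).

From HB Require Import structures.
From mathcomp Require Import all_boot all_order all_algebra.
From mathcomp Require Import all_classical all_reals all_analysis.
From mathcomp Require Import measurable_realfun Rstruct ring lra.
Set Implicit Arguments. Unset Strict Implicit. Unset Printing Implicit Defensive.
Import Order.TTheory GRing.Theory Num.Theory.
Local Open Scope classical_set_scope.
Local Open Scope ring_scope.

(* The proof is a Chernoff bound for a Gaussian quadratic form.
   - Linear algebra: K leapfrog steps act on each coordinate by the K-th power
     of a unimodular 2x2 matrix with half-trace m = 1 - kappa eta^2/2 <= -4,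
     whose entries are Chebyshev polynomials (T, u) obeying the Pell identity
     T^2 - (m^2 - 1) u^2 = 1 and growing like |m|^K.  Hence the energy change
     is Sum_i -(1/2)(A x_i^2 + 2 B x_i v_i + C v_i^2) with C >= 25 and
     8 B^2 <= 9 A C.
   - Probability: for s = 8/C the exponential exp(s Phi) of such a form is a
     product of Gaussian weights exp(a + b t - 4 t^2), whose N(0,1) means are
     explicit and at most 1/3; Markov's inequality on exp(s Phi) then gives
     failure probability at most exp(d/4) 3^-d <= (4/9)^d <= d^-5 for d >= 23.
   The file first computes Gaussian weight integrals, then the Chernoff bound
   under the product Gaussian measure, then the leapfrog coefficients, and
   finally combines them. *)

Section gaussian_weight.
Context {RT : realType}.
Local Notation mu := (@lebesgue_measure RT).

Lemma normal_prob_integralE (m s : RT) (f : RT -> \bar RT) :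
  measurable_fun [set: RT] f ->
  (\int[normal_prob m s]_x `|f x| < +oo)%E ->
  (\int[normal_prob m s]_x f x = \int[mu]_x (f x * (normal_pdf m s x)%:E))%E.
Proof.
move=> mf finf.
rewrite -(Radon_Nikodym_change_of_variables (normal_prob_dominates m s))//=;
  last by apply/integrableP.
apply: ae_eq_integral => //.
- apply: emeasurable_funM => //; apply: (measurable_int mu).
  apply: (integrableS _ _ (@subsetT _ _)) => //=.
  by apply: Radon_Nikodym_integrable; exact: normal_prob_dominates.
- apply: emeasurable_funM => //=; apply/measurableT_comp => //=.
  exact: measurable_normal_pdf.
- apply: ae_eqe_mul2l => /=.
  rewrite Radon_NikodymE//=; first exact: normal_prob_dominates.
  move=> abmu; case: cid => /= h [_ hint hE].
  apply: integral_ae_eq => //=.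
  + by apply/measurable_EFinP; exact: measurable_normal_pdf.
  + by move=> E _ mE; rewrite -hE.
Qed.

(* The Gaussian weight exp(a + b t - 4 t^2); a product of such weights is the
   exponential of a quadratic form in a standard Gaussian vector. *)
Definition gauss_weight (a b t : RT) : RT := expR (a + b * t - 4 * t ^+ 2).

Definition gauss_weight_mean (a b : RT) : RT := expR (a + b ^+ 2 / 18) / 3.

Lemma gauss_weight_ge0 a b t : 0 <= gauss_weight a b t.
Proof. exact: expR_ge0. Qed.

Lemma measurable_gauss_weight a b : measurable_fun [set: RT] (gauss_weight a b).
Proof.
apply: measurableT_comp => //; apply: measurable_funB.
  by apply: measurable_funD => //; exact: measurable_funM.
by apply: measurable_funM => //; exact: measurable_fun_pow.
Qed.

(* Completing the square: the weight is bounded. *)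
Lemma gauss_weight_ub a b t : gauss_weight a b t <= expR (a + b ^+ 2 / 16).
Proof.
rewrite /gauss_weight ler_expR.
have : 0 <= (b - 8 * t) ^+ 2 by exact: sqr_ge0.
lra.
Qed.

Lemma gauss_weight_integrable a b :
  (normal_prob 0 1).-integrable [set: RT] (EFin \o gauss_weight a b).
Proof.
apply/integrableP; split.
  by apply/measurable_EFinP; exact: measurable_gauss_weight.
apply: (@le_lt_trans _ _ (\int[normal_prob 0 1]_t (expR (a + b ^+ 2 / 16))%:E)%E).
  apply: ge0_le_integral => //.
  - apply/measurableT_comp => //; apply/measurable_EFinP; exact: measurable_gauss_weight.
  - by move=> t _ /=; rewrite lee_fin ger0_norm ?gauss_weight_ge0 ?gauss_weight_ub.
by rewrite integral_cst //= probability_setT mule1 ltry.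
Qed.

Lemma gauss_weight_pdf a b t :
  gauss_weight a b t * normal_pdf 0 1 t =
  gauss_weight_mean a b * normal_pdf (b / 9) 3^-1 t.
Proof.
have n30 : (3 : RT) != 0 by rewrite pnatr_eq0.
rewrite /normal_pdf oner_eq0 invr_eq0 (negbTE n30).
rewrite /normal_peak /normal_fun /gauss_weight /gauss_weight_mean.
set S := Num.sqrt (1 ^+ 2 * pi *+ 2).
have -> : Num.sqrt (3^-1 ^+ 2 * pi *+ 2) = S / 3.
  rewrite -mulrnAr -[pi]mul1r -(expr1n _ 2) sqrtrM ?sqr_ge0// sqrtr_sqr.
  by rewrite ger0_norm ?invr_ge0 ?ler0n// mulrC.
have S0 : S != 0.
  by rewrite /S sqrtr_eq0 -ltNge expr1n mul1r pmulrn_lgt0// pi_gt0.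
rewrite [RHS](_ : _ = S^-1 * (expR (a + b ^+ 2 / 18) *
    expR (- (t - b / 9) ^+ 2 / (3^-1 ^+ 2 *+ 2)))); last by field; rewrite S0.
rewrite mulrCA; congr (_ * _); rewrite -!exp.expRD; congr expR.
by rewrite expr1n subr0; field.
Qed.

Lemma gauss_weight_integral a b :
  (\int[normal_prob 0 1]_t (gauss_weight a b t)%:E =
   (gauss_weight_mean a b)%:E)%E.
Proof.
have /integrableP[mg fing] := gauss_weight_integrable a b.
rewrite normal_prob_integralE//.
under eq_integral do rewrite -EFinM gauss_weight_pdf EFinM.
rewrite ge0_integralZl//.
- by rewrite integral_normal_pdf mule1.
- by apply/measurable_EFinP; exact: measurable_normal_pdf.
- by move=> t _; rewrite lee_fin normal_pdf_ge0.
- by rewrite lee_fin divr_ge0 ?expR_ge0.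
Qed.

Lemma gauss_weight_affine_integral (c k a b : RT) :
  (\int[normal_prob 0 1]_t (c - k * gauss_weight a b t)%:E =
   (c - k * gauss_weight_mean a b)%:E)%E.
Proof.
transitivity (\int[normal_prob 0 1]_t ((cst c t)%:E - (k * gauss_weight a b t)%:E))%E.
  by apply: eq_integral => t _; rewrite EFinB.
rewrite integralB_EFin //; last first.
- have := integrableZl measurableT k (gauss_weight_integrable a b).
  by apply: eq_integrable => // t _ /=; rewrite EFinM.
- exact: finite_measure_integrable_cst.
rewrite (eq_integral (cst c%:E)) // integral_cst //= probability_setT mule1.
under eq_integral do rewrite EFinM.
by rewrite integralZl ?gauss_weight_integrable // gauss_weight_integral.
Qed.

End gaussian_weight.

Section integral_monotone.
Local Open Scope ereal_scope.

(* The integral is monotone with no measurability assumption: it is the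
   difference of the integrals of the positive and negative parts, each a
   supremum over the simple functions below it. *)
Lemma le_integral_pointwise d (T : measurableType d) (RT : realType)
  (mu : {measure set T -> \bar RT}) (D : set T) (f g : T -> \bar RT) :
  (forall x, f x <= g x) -> \int[mu]_(x in D) f x <= \int[mu]_(x in D) g x.
Proof.
move=> fg; rewrite /integral.
apply: leeB; apply: ereal_sup_le => _ [h hf <-]; exists h => //= x;
  apply: (le_trans (hf x)); rewrite ?funeposE ?funenegE /patch /=;
  case: ifP => _ //; rewrite ge_max !le_max ?leeN2 fg lexx !orbT //.
Qed.

End integral_monotone.

Lemma gauss_iter_le n (F G : n.-tuple R -> \bar R) :
  (forall v, (F v <= G v)%E) -> (gauss_iter F <= gauss_iter G)%E.
Proof.
elim: n F G => [|n IH] F G FG /=; first exact: FG.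
by apply: le_integral_pointwise => t; apply: IH => v; exact: FG.
Qed.

Lemma gauss_iter_weight_prod n (c k : R) (a b : 'I_n -> R) :
  gauss_iter (fun v : n.-tuple R =>
    (c - k * \prod_(i < n) gauss_weight (a i) (b i) (tnth v i))%:E) =
  (c - k * \prod_(i < n) gauss_weight_mean (a i) (b i))%:E.
Proof.
elim: n k a b => [|n IH] k a b /=; first by rewrite !big_ord0.
set P := \prod_(i < n) gauss_weight_mean (a (lift ord0 i)) (b (lift ord0 i)).
have inner t : gauss_iter (fun v : n.-tuple R => (c - k *
    \prod_(i < n.+1) gauss_weight (a i) (b i) (tnth (cons_tuple t v) i))%:E) =
    (c - k * P * gauss_weight (a ord0) (b ord0) t)%:E.
  transitivity (gauss_iter (fun v : n.-tuple R =>
    (c - k * gauss_weight (a ord0) (b ord0) t * \prod_(i < n)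
       gauss_weight (a (lift ord0 i)) (b (lift ord0 i)) (tnth v i))%:E)).
    congr gauss_iter; apply/funext => v; rewrite big_ord_recl mulrA.
    by under eq_bigr do rewrite tnthS.
  by rewrite IH mulrAC.
under eq_integral do rewrite inner.
rewrite gauss_weight_affine_integral big_ord_recl -/P.
by congr (_ - _)%:E; ring.
Qed.

Lemma chernoff_indicator (s t p : R) :
  0 < s -> 1 - expR (s * (t + p)) <= (p <= - t)%R%:R.
Proof.
move=> s0; have [hp|hp] := boolP (p <= - t).
  by have := expR_ge0 (s * (t + p)); rewrite /=; lra.
have : 0 < s * (t + p) by apply: mulr_gt0 => //; rewrite -ltNge in hp; lra.
have := expR_ge1Dx (s * (t + p)); rewrite /=; lra.
Qed.

Lemma gauss_prob_chernoff n (Phi : n.-tuple R -> R) (s t : R) (a b : 'I_n -> R) :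
  0 < s ->
  (forall v, expR (s * Phi v) =
     \prod_(i < n) gauss_weight (a i) (b i) (tnth v i)) ->
  ((1 - expR (s * t) * \prod_(i < n) gauss_weight_mean (a i) (b i))%:E
     <= gauss_prob [set v | (Phi v <= - t)%R])%E.
Proof.
move=> s0 hPhi; rewrite /gauss_prob -gauss_iter_weight_prod.
apply: gauss_iter_le => v; rewrite -hPhi -exp.expRD -mulrDr indicE lee_fin.
have -> : (v \in [set v | Phi v <= - t]) = (Phi v <= - t).
  by apply/idP/idP => [/set_mem|/mem_set].
exact: chernoff_indicator.
Qed.

Section leapfrog_coefficients.
Variable F : realFieldType.

(* (T_K(m), U_(K-1)(m)): Chebyshev polynomials of the first and second kind,
   i.e. the entries of the K-th power of a unimodular 2x2 matrix of half-trace
   m, computed by the matrix recursion. *)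
Fixpoint cheb (m : F) (K : nat) : F * F :=
  if K is K'.+1 then
    ((cheb m K').1 * m + (m ^+ 2 - 1) * (cheb m K').2,
     m * (cheb m K').2 + (cheb m K').1)
  else (1, 0).

(* Determinant one: the Pell identity T^2 - (m^2 - 1) U^2 = 1. *)
Lemma cheb_pell m K : (cheb m K).1 ^+ 2 - (m ^+ 2 - 1) * (cheb m K).2 ^+ 2 = 1.
Proof. by elim: K => [|K IH] /=; [ring | rewrite -[RHS]IH; ring]. Qed.

Lemma cheb_growth m K : m <= -4 -> (1 <= K)%N ->
  [/\ (cheb m K).1 * (cheb m K).2 < 0, 1 <= (cheb m K).2 ^+ 2
    & 16 <= (cheb m K).1 ^+ 2].
Proof.
move=> hm; elim: K => [//|[|K] IH] _; first by rewrite /=; split; nra.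
have [] := IH isT; rewrite [cheb m K.+2]/=.
set T := (cheb m K.+1).1; set u := (cheb m K.+1).2 => hTu hu hT.
have hm2 : 16 <= m ^+ 2 by nra.
have hTu' : 0 <= m * (T * u) by nra.
have hq : 0 <= T ^+ 2 + (m ^+ 2 - 1) * u ^+ 2.
  by apply: addr_ge0; [exact: sqr_ge0 | apply: mulr_ge0; [lra | exact: sqr_ge0]].
split.
- have -> : (T * m + (m ^+ 2 - 1) * u) * (m * u + T) =
    (2 * m ^+ 2 - 1) * (T * u) + m * (T ^+ 2 + (m ^+ 2 - 1) * u ^+ 2) by ring.
  nra.
- have -> : (m * u + T) ^+ 2 = m ^+ 2 * u ^+ 2 + 2 * (m * (T * u)) + T ^+ 2
    by ring.
  have := sqr_ge0 T; nra.
- have -> : (T * m + (m ^+ 2 - 1) * u) ^+ 2 = m ^+ 2 * T ^+ 2 +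
    2 * (m ^+ 2 - 1) * (m * (T * u)) + (m ^+ 2 - 1) ^+ 2 * u ^+ 2 by ring.
  have : 0 <= (m ^+ 2 - 1) ^+ 2 * u ^+ 2 by apply: mulr_ge0; exact: sqr_ge0.
  have : 0 <= (m ^+ 2 - 1) * (m * (T * u)) by apply: mulr_ge0; lra.
  have : 0 <= (m ^+ 2 - 16) * T ^+ 2 by apply: mulr_ge0; [lra | exact: sqr_ge0].
  nra.
Qed.

(* One leapfrog step for f = kappa/2 |x|^2 acts on each coordinate by the
   matrix [[m, eta], [-kappa eta w, m]] with m = lf_m and w = lf_w. *)
Definition lf_m (kappa eta : F) : F := 1 - kappa * eta ^+ 2 / 2.
Definition lf_w (kappa eta : F) : F := 1 - kappa * eta ^+ 2 / 4.

Lemma lf_m_le (kappa eta : F) : 10 <= kappa -> 1 <= eta -> lf_m kappa eta <= -4.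
Proof.
move=> hk he; have : 1 <= eta ^+ 2 by nra.
rewrite /lf_m; nra.
Qed.

(* Coefficients of the energy change (H(x0,v0) - H(xK,vK) is minus one half of
   the quadratic form xx x^2 + 2 xv x v + vv v^2) when K leapfrog steps act by
   [[T, eta u], [-kappa eta w u, T]]. *)
Definition energy_xx (kappa eta T u : F) : F :=
  kappa * T ^+ 2 + (- (kappa * eta * lf_w kappa eta * u)) ^+ 2 - kappa.
Definition energy_xv (kappa eta T u : F) : F :=
  kappa * T * (eta * u) + (- (kappa * eta * lf_w kappa eta * u)) * T.
Definition energy_vv (kappa eta T u : F) : F :=
  kappa * (eta * u) ^+ 2 + T ^+ 2 - 1.

Lemma energy_coef_bounds (kappa eta T u : F) : 10 <= kappa -> 1 <= eta ->
  T ^+ 2 - (lf_m kappa eta ^+ 2 - 1) * u ^+ 2 = 1 -> 1 <= u ^+ 2 ->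
  16 <= T ^+ 2 ->
  25 <= energy_vv kappa eta T u /\
  8 * energy_xv kappa eta T u ^+ 2 <=
    9 * energy_xx kappa eta T u * energy_vv kappa eta T u.
Proof.
move=> hk he hpell hu hT.
have hS : T ^+ 2 = 1 + (lf_m kappa eta ^+ 2 - 1) * u ^+ 2 by lra.
set h := kappa * eta ^+ 2.
have hh : 10 <= h.
  have : 1 <= eta ^+ 2 by nra.
  by rewrite /h; nra.
have Evv : energy_vv kappa eta T u = u ^+ 2 * h ^+ 2 / 4.
  by rewrite /energy_vv hS /lf_m /h; field.
have E : 9 * energy_xx kappa eta T u * energy_vv kappa eta T u -
    8 * energy_xv kappa eta T u ^+ 2 = kappa * u ^+ 2 * h ^+ 3 * (T ^+ 2 - 9) / 16.
  have -> : energy_xv kappa eta T u ^+ 2 =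
      (kappa * eta * u * (1 - lf_w kappa eta)) ^+ 2 * T ^+ 2.
    by rewrite /energy_xv; ring.
  by rewrite Evv /energy_xx hS /lf_w /lf_m /h; field.
split.
  rewrite Evv; have : h ^+ 2 <= u ^+ 2 * h ^+ 2.
    by rewrite -[X in X <= _]mul1r ler_wpM2r ?sqr_ge0.
  nra.
suff : 0 <= kappa * u ^+ 2 * h ^+ 3 * (T ^+ 2 - 9) / 16 by lra.
apply: divr_ge0; last lra.
apply: mulr_ge0; last lra.
apply: mulr_ge0; last by apply: exprn_ge0; lra.
by apply: mulr_ge0; [lra | exact: sqr_ge0].
Qed.

End leapfrog_coefficients.

Lemma leapfrog_closed_form d (kappa eta : R) K (x0 v : 'I_d -> R) :
  let T := (cheb (lf_m kappa eta) K).1 in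
  let u := (cheb (lf_m kappa eta) K).2 in
  leapfrog (grad_fquad kappa) eta K (x0, v) =
  ((fun i => T * x0 i + eta * u * v i),
   (fun i => - (kappa * eta * lf_w kappa eta * u) * x0 i + T * v i)).
Proof.
rewrite /leapfrog; elim: K => [|K IH] /=.
  by congr (_, _); apply/funext => i /=; ring.
rewrite IH /leapfrog_step /grad_fquad /=.
by congr (_, _); apply/funext => i /=; rewrite /lf_m /lf_w; field.
Qed.

Definition energy_form (A B C x v : R) : R :=
  - (1/2) * (A * x ^+ 2 + 2 * B * x * v + C * v ^+ 2).

Lemma hamiltonian_linear_diff d (kappa a b c e : R) (x v : 'I_d -> R) :
  hamiltonian kappa x v -
  hamiltonian kappa (fun i => a * x i + b * v i) (fun i => c * x i + e * v i) =
  \sum_(i < d) energy_form (kappa * a ^+ 2 + c ^+ 2 - kappa)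
    (kappa * a * b + c * e) (kappa * b ^+ 2 + e ^+ 2 - 1) (x i) (v i).
Proof.
rewrite /hamiltonian /fquad !mulr_sumr -!big_split -sumrB /=.
by apply: eq_bigr => i _; rewrite /energy_form; field.
Qed.

Lemma exp_energy_form (A B C x v : R) : C != 0 ->
  expR (8 / C * energy_form A B C x v) =
  gauss_weight (- (4 / C) * A * x ^+ 2) (- (8 / C) * B * x) v.
Proof. by move=> C0; rewrite /gauss_weight /energy_form; congr expR; field. Qed.

Lemma energy_weight_mean_le (A B C x : R) : 0 < C -> 8 * B ^+ 2 <= 9 * A * C ->
  gauss_weight_mean (- (4 / C) * A * x ^+ 2) (- (8 / C) * B * x) <= 3^-1.
Proof.
move=> C0 hABC; rewrite /gauss_weight_mean ler_pdivrMr // mulVf //.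
rewrite -[X in _ <= X](exp.expR0 R) ler_expR.
have -> : - (4 / C) * A * x ^+ 2 + (- (8 / C) * B * x) ^+ 2 / 18 =
    - (x ^+ 2 * (9 * A * C - 8 * B ^+ 2)) * 4 / (9 * C ^+ 2).
  by field; rewrite gt_eqF.
rewrite mulNr mulNr oppr_le0; apply: divr_ge0; last by rewrite mulr_ge0 ?sqr_ge0.
by apply: mulr_ge0 => //; apply: mulr_ge0; [exact: sqr_ge0 | lra].
Qed.

Lemma expR_quarter_le : expR (4^-1 : R) <= 4 / 3.
Proof.
have := expR_ge1Dx (- 4^-1 : R).
have : expR (4^-1 : R) * expR (- 4^-1) = 1 by rewrite -exp.expRD subrr exp.expR0.
have := expR_ge0 (4^-1 : R).
nra.
Qed.

Lemma chernoff_prefactor_le n (C : R) : 25 <= C ->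
  expR (8 / C * (25 / 32 * n%:R)) <= (4 / 3) ^+ n.
Proof.
move=> hC; apply: (@le_trans _ _ (expR (4^-1 : R) ^+ n)); last first.
  by apply: lerXn2r; rewrite ?nnegrE ?expR_ge0 ?expR_quarter_le //; lra.
rewrite -expRM_natl ler_expR.
have -> : 8 / C * (25 / 32 * n%:R) = 25 / C * (n%:R / 4) by field; rewrite gt_eqF //; lra.
have : 25 / C <= 1 by rewrite ler_pdivrMr ?mul1r //; lra.
have : 0 <= n%:R / 4 :> R by rewrite divr_ge0.
nra.
Qed.

Lemma gauss_energy_tail n (A B C : R) (x : 'I_n -> R) :
  25 <= C -> 8 * B ^+ 2 <= 9 * A * C ->
  ((1 - (4 / 9) ^+ n)%:E <= gauss_prob [set v : n.-tuple R |
     (\sum_(i < n) energy_form A B C (x i) (tnth v i) <= - (25 / 32 * n%:R))%R])%E.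
Proof.
move=> hC hABC; have C0 : 0 < C by lra.
apply: le_trans (@gauss_prob_chernoff n
  (fun v => \sum_(i < n) energy_form A B C (x i) (tnth v i)) (8 / C)
  (25 / 32 * n%:R) (fun i => - (4 / C) * A * x i ^+ 2)
  (fun i => - (8 / C) * B * x i) _ _); last 2 first.
- by rewrite divr_gt0.
- move=> v; rewrite mulr_sumr expR_sum; apply: eq_bigr => i _.
  by rewrite exp_energy_form ?gt_eqF.
rewrite lee_fin lerD2l lerN2.
set P := \prod_(i < n) _.
have hmean i : 0 <= gauss_weight_mean (- (4 / C) * A * x i ^+ 2) (- (8 / C) * B * x i) <= 3^-1.
  by rewrite energy_weight_mean_le // andbT divr_ge0 ?expR_ge0.
have hP : P <= 3^-1 ^+ n.
  rewrite (_ : 3^-1 ^+ n = \prod_(i < n) (3^-1 : R)); last first.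
    by rewrite prodr_const card_ord.
  by apply: ler_prod => i _; exact: hmean.
have hP0 : 0 <= P by apply: prodr_ge0 => i _; case/andP: (hmean i).
apply: le_trans (ler_pM (expR_ge0 _) hP0 (chernoff_prefactor_le n hC) hP) _.
by rewrite -exprMn; apply: lerXn2r; rewrite ?nnegrE //; lra.
Qed.

Lemma pow5_le_pow2 n : (23 <= n)%N -> (n%:R : R) ^+ 5 <= 2 ^+ n.
Proof.
elim: n => [//|n IH]; rewrite leq_eqVlt => /orP[/eqP <-|hn]; first lra.
have := IH hn; have hx : 23 <= (n%:R : R) by rewrite (ler_nat R 23 n).
have h1 : 0 <= (n%:R:R) * ((n%:R:R) - 23) by apply: mulr_ge0; lra.
have h2 : 0 <= (n%:R:R) ^+ 2 * ((n%:R:R) - 23) by apply: mulr_ge0; [exact: sqr_ge0 | lra].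
have h3 : 0 <= (n%:R:R) ^+ 3 * ((n%:R:R) - 23) by apply: mulr_ge0; [apply: exprn_ge0; lra | lra].
have h4 : 0 <= (n%:R:R) ^+ 4 * ((n%:R:R) - 23) by apply: mulr_ge0; [apply: exprn_ge0; lra | lra].
rewrite -[n.+1]addn1 natrD exprD expr1 => hI.
have : ((n%:R:R) + 1) ^+ 5 <= 2 * (n%:R:R) ^+ 5 by nra.
lra.
Qed.

Lemma geom_le_inv_pow5 n : (23 <= n)%N -> (4 / 9 : R) ^+ n <= n%:R ^- 5.
Proof.
move=> hn; apply: (@le_trans _ _ (2^-1 ^+ n)).
  by apply: lerXn2r; rewrite ?nnegrE //; lra.
have n0 : (0 < n)%N by apply: leq_trans hn.
rewrite exprVn ler_pV2 ?pow5_le_pow2 // ?inE ?unitfE ?exprn_gt0 ?expf_neq0 //.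
- by rewrite pnatr_eq0 -lt0n.
- by rewrite ltr0n.
Qed.

Theorem lemma15 :
  exists (c : R) (d0 : nat), 0 < c /\
  forall (d : nat) (kappa : R) (K : nat) (eta : R) (x0 : 'I_d -> R),
    (d0 <= d)%N -> 10 <= kappa -> (1 <= K)%N -> 1 <= eta ->
    (gauss_prob
       [set v0 : d.-tuple R |
          let sK := leapfrog (grad_fquad kappa) eta K (x0, tnth v0) in
          (hamiltonian kappa x0 (tnth v0) - hamiltonian kappa sK.1 sK.2
            <= - (c * d%:R))%R]
     >= (1 - (d%:R) ^- 5)%:E)%E.
Proof.
exists (25 / 32), 23%N; split; first lra.
move=> d kappa K eta x0 hd hk hK he.
set T := (cheb (lf_m kappa eta) K).1; set u := (cheb (lf_m kappa eta) K).2.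
have [_ hu hT] := cheb_growth (lf_m_le hk he) hK.
have [hC hABC] := energy_coef_bounds hk he (cheb_pell _ _) hu hT.
set S := [set _ | _].
have -> : S = [set v | (\sum_(i < d) energy_form (energy_xx kappa eta T u)
    (energy_xv kappa eta T u) (energy_vv kappa eta T u) (x0 i) (tnth v i)
    <= - (25 / 32 * d%:R))%R].
  by apply/funext => v; rewrite /S /= leapfrog_closed_form hamiltonian_linear_diff.
apply: le_trans (gauss_energy_tail x0 hC hABC).
by rewrite lee_fin lerD2l lerN2 geom_le_inv_pow5.
Qed.
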